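(* For every integer $\kappa\ge 1$: if there exists a $\frac{\kappa+1}{\kappa}$-APLS for the minimum edge cover problem on graphs of odd-girth at least $2\kappa+1$ with proof size $r$, then there exists a PLS for the minimum edge cover problem on rings with $2\kappa+1$ nodes with proof size $r+O(1)$.
   Context: All graphs are finite, connected and undirected, $G=(V,E)$, $n=|V|$, $N(v)$ is the set of neighbors of $v$; each node distinguishes its incident edges by port numbers. An input assignment $\mathsf{I}:V\to\{0,1\}^*$ and an output assignment $\mathsf{O}:V\to\{0,1\}^*$ give each node a local input and a local output; an IO graph $\langle G,\mathsf I,\mathsf O\rangle$ is a configuration graph with $S(v)=\mathsf I(v)\cdot\mathsf O(v)$. Given a universe $\mathcal U$ of configuration graphs and disjoint families $\mathcal F_Y,\mathcal F_N\subseteq\mathcal U$, a gap proof labeling scheme (GPLS) consists of a prover which, given a configuration graph in $\mathcal F_Y$, assigns a label $L(v)\in\{0,1\}^*$ to every node, and a verifier which at each node $v$ receives only $\langle S(v),L(v),L^N(v)\rangle$, where $L^N(v)$ is the vector of labels of $v$'s neighbors (indexed by port), and outputs True or False; the verifier accepts if all nodes output True and rejects otherwise. The GPLS is correct if (i) for every configuration graph in $\mathcal F_Y$ the verifier accepts under the prover's labels, and (ii) for every configuration graph in $\mathcal F_N$ the verifier rejects under every label assignment. Its proof size is the maximum label length assigned by the prover over configuration graphs in $\mathcal F_Y$. For an optimization problem $\Psi=\langle\Pi,f\rangle$ ($\Pi$ a set of IO graphs = feasible solutions, $f$ integer objective, $OPT_\Psi(G,\mathsf I)$ the optimum over feasible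 $\mathsf O$), and $\alpha\ge1$, an $\alpha$-APLS is a GPLS over $\mathcal U=\{\langle G,\mathsf I,\mathsf O\rangle:\langle G,\mathsf I\rangle\text{ admits a feasible solution}\}$ with $\mathcal F_Y$ the IO graphs in $\Pi$ with $f=OPT_\Psi$, and $\mathcal F_N$ equal to $\mathcal U$ minus the IO graphs in $\Pi$ with $f\le\alpha\cdot OPT_\Psi$ (minimization) resp. $f\ge OPT_\Psi/\alpha$ (maximization). A PLS is a $1$-APLS. Restricting to a graph family means the universe contains only IO graphs whose underlying graph lies in the family. Minimum edge cover: the output assignment encodes a set $C\subseteq E$; it is feasible iff $C$ is an edge cover (every node is incident on an edge of $C$), and $f=|C|$ is minimized. The odd-girth of a graph is the length of its shortest odd cycle. A ring is a cycle graph. *)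

From mathcomp Require Import all_boot.

Definition bits := seq bool.

(** A port-numbered graph on nodes 'I_n: [pg_port v] lists the neighbours
    of [v] in port order (port i of v leads to [nth _ (pg_port v) i]). *)
Record pgraph := PGraph { pg_n : nat; pg_port : 'I_pg_n -> seq 'I_pg_n }.

Definition node (G : pgraph) := 'I_(pg_n G).
Definition deg (G : pgraph) (v : node G) := size (pg_port G v).
Definition adj (G : pgraph) : rel (node G) := fun u v => v \in pg_port G u.

Definition wf_graph (G : pgraph) : Prop :=
  [/\ 0 < pg_n G,
      (forall v : node G, uniq (pg_port G v)),
      (forall v : node G, ~~ adj G v v),
      (forall u v : node G, adj G u v = adj G v u)
    & (forall u v : node G, connect (adj G) u v)].

Definition iopred := forall G : pgraph, (node G -> bits) -> (node G -> bits) -> Prop.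

(** A verifier sees at v: S(v) = (I(v), O(v)), its own label L(v), and
    the vector of neighbours' labels indexed by port. *)
Definition verifier := bits -> bits -> bits -> seq bits -> bool.
Definition prover_t := forall G : pgraph, (node G -> bits) -> (node G -> bits) -> node G -> bits.

Definition nbr_labels (G : pgraph) (L : node G -> bits) (v : node G) : seq bits :=
  map L (pg_port G v).

Definition accepts (ver : verifier) (G : pgraph) (I O L : node G -> bits) : Prop :=
  forall v : node G, ver (I v) (O v) (L v) (nbr_labels G L v).

Definition is_gpls (FY FN : iopred) (prv : prover_t) (ver : verifier) : Prop :=
  (forall G I O, FY G I O -> accepts ver G I O (prv G I O)) /\
  (forall G I O, FN G I O -> forall L : node G -> bits, ~ accepts ver G I O L).

Definition proof_size_le (FY : iopred) (prv : prover_t) (r : nat) : Prop :=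
  forall G I O, FY G I O -> forall v : node G, size (prv G I O v) <= r.

(** Output encoding of C ⊆ E: O(v) is a bit vector indexed by v's ports,
    bit i = 1 iff the edge at port i is in C; both endpoints must agree. *)
Definition ebit (G : pgraph) (O : node G -> bits) (v u : node G) : bool :=
  nth false (O v) (index u (pg_port G v)).

Definition encodes_edge_set (G : pgraph) (O : node G -> bits) : Prop :=
  (forall v : node G, size (O v) = deg G v) /\
  (forall u v : node G, adj G u v -> ebit G O u v = ebit G O v u).

Definition ec_feasible (G : pgraph) (O : node G -> bits) : Prop :=
  encodes_edge_set G O /\ (forall v : node G, has id (O v)).

(** objective f = |C| (each edge is marked at both endpoints) *)
Definition ec_size (G : pgraph) (O : node G -> bits) : nat :=
  (\sum_(v : node G) count id (O v))./2.

Definition is_OPT_ec (G : pgraph) (k : nat) : Prop :=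
  (exists O : node G -> bits, ec_feasible G O /\ ec_size G O = k) /\
  (forall O : node G -> bits, ec_feasible G O -> k <= ec_size G O).

Definition ec_universe (P : pgraph -> Prop) : iopred :=
  fun G I O => [/\ wf_graph G, P G & exists O', ec_feasible G O'].

Definition ec_FY (P : pgraph -> Prop) : iopred :=
  fun G I O => [/\ ec_universe P G I O, ec_feasible G O & is_OPT_ec G (ec_size G O)].

(** alpha = a / b; minimization: "good" iff feasible and f <= alpha * OPT *)
Definition ec_FN (a b : nat) (P : pgraph -> Prop) : iopred :=
  fun G I O => ec_universe P G I O /\
    ~ (ec_feasible G O /\ exists k, is_OPT_ec G k /\ b * ec_size G O <= a * k).

Definition has_ec_apls (a b : nat) (P : pgraph -> Prop) (r : nat) : Prop :=
  exists (prv : prover_t) (ver : verifier),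
    is_gpls (ec_FY P) (ec_FN a b P) prv ver /\ proof_size_le (ec_FY P) prv r.

Definition odd_girth_ge (k : nat) (G : pgraph) : Prop :=
  forall c : seq (node G), ucycle (adj G) c -> odd (size c) -> k <= size c.

Definition is_ring (m : nat) (G : pgraph) : Prop :=
  pg_n G = m /\
  exists s : seq (node G), [/\ uniq s, size s = m &
    forall u v : node G, adj G v u = (u == next s v) || (u == prev s v)].

(** Let (prv, ver) be the APLS.  The new scheme prepends to each label one bit
    announcing whether the node is *rich* (at least two of its ports in C); the
    new verifier checks that bit, forbids a rich *saturated* node (all ports in C)
    to have a rich neighbour, and runs [ver] on the rest of the labels.

    - Completeness: an optimal edge cover never contains an edge between two rich
      nodes (drop it to get a smaller cover), and the ring C_{2κ+1} has odd-girth
      2κ+1, so the old prover's labels still pass.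
    - Soundness: an accepted labelling of the ring lifts to an accepted labelling
      of its bipartite double cover, the ring C_{4κ+2}, which has no odd cycle.
      Soundness of the APLS there forces the lifted cover to weigh at most
      (κ+1)/κ·OPT ≤ (κ+1)(2κ+1)/κ, i.e. the original cover C has |C| ≤ κ+1 = OPT,
      or κ = 1 and C is the whole triangle — which the rich-bit check rejects. *)

From mathcomp Require Import all_boot.
From mathcomp Require Import zify.
Set Implicit Arguments. Unset Strict Implicit.

Lemma count_eq_sum_index (T : eqType) (p : seq T) (b : seq bool) :
  uniq p -> size b = size p ->
  count id b = \sum_(u <- p) nth false b (index u p).
Proof.
elim: p b => [|x p IH] [|y b] //=; first by rewrite big_nil.
move=> /andP[xp up] [sb].
rewrite big_cons eqxx /= (IH b up sb); congr (_ + _).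
apply: eq_big_seq => u up'.
by case: eqP => // eux; rewrite eux up' in xp.
Qed.

Lemma count_set_nth_false (b : seq bool) i : i < size b ->
  count id (set_nth false b i false) + nth false b i = count id b.
Proof.
elim: b i => [|y b IH] [|i] //= H.
  by case: y; rewrite ?addn0 // addnC.
by rewrite -addnA IH.
Qed.

Lemma index_eq_mem (T : eqType) (p : seq T) a b : a \in p -> b \in p ->
  (index a p == index b p) = (a == b).
Proof.
move=> ap bp; apply/eqP/eqP => [h|->//].
by rewrite -(nth_index a ap) h nth_index.
Qed.

Lemma nth_map_index (T : eqType) (p : seq T) (f : T -> bool) u : u \in p ->
  nth false (map f p) (index u p) = f u.
Proof. by move=> up; rewrite (nth_map u) ?index_mem // nth_index. Qed.

Definition remove_edge G (O : node G -> bits) (v u : node G) (w : node G) : bits :=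
  if w == v then set_nth false (O v) (index u (pg_port G v)) false
  else if w == u then set_nth false (O u) (index v (pg_port G u)) false
  else O w.

Lemma ebit_remove G (O : node G -> bits) v u a b : v != u ->
  b \in pg_port G a -> u \in pg_port G v -> v \in pg_port G u ->
  ebit G (remove_edge O v u) a b =
  ebit G O a b && ~~ ((a == v) && (b == u) || (a == u) && (b == v)).
Proof.
move=> nvu ba uv vu; rewrite /ebit /remove_edge.
case: (eqVneq a v) ba => [->|nav] ba /=.
  rewrite nth_set_nth /= (index_eq_mem ba uv).
  by case: eqP => [->|_] /=; rewrite ?andbF ?(negbTE nvu) /= ?andbT.
case: (eqVneq a u) ba => [->|nau] ba /=.
  rewrite nth_set_nth /= (index_eq_mem ba vu).
  by case: eqP => [->|_] /=; rewrite ?andbF /= ?andbT.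
by rewrite andbT.
Qed.

Lemma sum_eq1 (T : finType) (v : T) : \sum_(w : T) (w == v : nat) = 1.
Proof. by rewrite (bigD1 v) //= eqxx big1 // => w /negbTE ->. Qed.

Definition rich (o : bits) : bool := 1 < count id o.

Definition saturated (o : bits) : bool := count id o == size o.

(** An optimal edge cover has no edge between two rich nodes: removing it
    leaves an edge cover with one edge less. *)
Lemma optimal_cover_no_rich_edge G (O : node G -> bits) (v u : node G) :
  wf_graph G -> ec_feasible G O ->
  (forall O', ec_feasible G O' -> ec_size G O <= ec_size G O') ->
  adj G v u -> ebit G O v u -> rich (O v) -> rich (O u) -> False.
Proof.
move=> [_ _ irr sym _] [[sz cons] hid] opt avu bvu cv cu.
have nvu : v != u by apply/eqP => e; move: avu; rewrite e (negbTE (irr u)).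
have auv : adj G u v by rewrite sym.
have iu : index u (pg_port G v) < size (O v) by rewrite sz index_mem.
have iv : index v (pg_port G u) < size (O u) by rewrite sz index_mem.
have buv : ebit G O u v by rewrite -cons.
set O' := remove_edge O v u.
have cnt w : count id (O' w) + (w == v) + (w == u) = count id (O w).
  rewrite /O' /remove_edge; case: (eqVneq w v) => [->|nwv].
    have := count_set_nth_false iu; rewrite -/(ebit G O v u) bvu => <-.
    by rewrite (negbTE nvu) addn0.
  case: (eqVneq w u) => [->|nwu] /=; last by rewrite !addn0.
  have := count_set_nth_false iv; rewrite -/(ebit G O u v) buv => <-.
  by rewrite addn0.
have feas : ec_feasible G O'.
  split; first split.
  - move=> w; rewrite /O' /remove_edge.
    case: (eqVneq w v) => [->|_]; first by rewrite size_set_nth -sz; apply/maxn_idPr.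
    case: (eqVneq w u) => [->|_]; first by rewrite size_set_nth -sz; apply/maxn_idPr.
    exact: sz.
  - move=> a b aab; have aba : adj G b a by rewrite sym.
    rewrite !ebit_remove // cons //.
    by case: (a == v); case: (a == u); case: (b == v); case: (b == u).
  - move=> w; rewrite has_count; have := cnt w; move: cu cv; rewrite /rich.
    case: (eqVneq w v) => [->|nwv]; first by rewrite (negbTE nvu) /=; lia.
    case: (eqVneq w u) => [->|nwu]; first by rewrite /=; lia.
    by rewrite /= !addn0 => _ _ ->; rewrite -has_count.
have := opt _ feas; rewrite /ec_size.
have -> : \sum_(w : node G) count id (O w) = (\sum_(w : node G) count id (O' w)).+2.
  by rewrite -(eq_bigr _ (fun w _ => cnt w)) !big_split /= !sum_eq1 !addn1.
by rewrite /= ltnn.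
Qed.

(** ** The bipartite double cover

    Node [v] of [G] gives two nodes [lift v false] and [lift v true] of
    [double_cover G]; every edge [uv] of [G] gives the two edges joining
    opposite sides.  Port numbers are inherited from [G]. *)

Definition lift (n : nat) (v : 'I_n) (b : bool) : 'I_(n + n) :=
  unsplit (if b then inr v else inl v).
Definition proj (n : nat) (x : 'I_(n + n)) : 'I_n :=
  match split x with inl v => v | inr v => v end.
Definition side (n : nat) (x : 'I_(n + n)) : bool :=
  if split x is inr _ then true else false.

Lemma proj_lift n (v : 'I_n) b : proj (lift v b) = v.
Proof. by rewrite /proj /lift unsplitK; case: b. Qed.
Lemma side_lift n (v : 'I_n) b : side (lift v b) = b.
Proof. by rewrite /side /lift unsplitK; case: b. Qed.
Lemma lift_proj n (x : 'I_(n + n)) : lift (proj x) (side x) = x.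
Proof. by rewrite /lift /proj /side -[RHS]splitK; case: (split x). Qed.
Lemma lift_inj n b : injective (fun v : 'I_n => lift v b).
Proof. by move=> u v /(congr1 (@proj n)); rewrite !proj_lift. Qed.

Definition double_cover (G : pgraph) : pgraph :=
  @PGraph (pg_n G + pg_n G)
    (fun x => map (fun u => lift u (~~ side x)) (pg_port G (proj x))).

Lemma mem_map_lift n (p : seq 'I_n) c (y : 'I_(n + n)) :
  (y \in map (fun u => lift u c) p) = (side y == c) && (proj y \in p).
Proof.
rewrite -{1}(lift_proj y); case: eqP => [<-|ne].
  by rewrite (mem_map (@lift_inj n _)).
by apply/mapP => -[u _ /(congr1 (@side n))]; rewrite !side_lift.
Qed.

Lemma adj_double_cover G (x y : node (double_cover G)) :
  adj (double_cover G) x y = (side y == ~~ side x) && adj G (proj x) (proj y).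
Proof. by rewrite /adj /= mem_map_lift. Qed.

Lemma deg_double_cover G (x : node (double_cover G)) :
  deg (double_cover G) x = deg G (proj x).
Proof. by rewrite /deg /= size_map. Qed.

Lemma ebit_double_cover G (O : node (double_cover G) -> bits) (x y : node (double_cover G)) :
  side y = ~~ side x ->
  ebit (double_cover G) O x y = nth false (O x) (index (proj y) (pg_port G (proj x))).
Proof.
move=> sy; rewrite /ebit /= -{1}(lift_proj y) sy.
by rewrite (index_map (@lift_inj _ _)).
Qed.

Lemma nbr_labels_double_cover G (L : node G -> bits) (x : node (double_cover G)) :
  nbr_labels (double_cover G) (fun y => behead (L (proj y))) x =
  map behead (nbr_labels G L (proj x)).
Proof.
by rewrite /nbr_labels /= -!map_comp; apply: eq_map => u /=; rewrite proj_lift.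
Qed.

Lemma sum_double_cover n (F : 'I_n -> nat) :
  \sum_(x < n + n) F (proj x) = \sum_(v < n) F v + \sum_(v < n) F v.
Proof.
rewrite big_split_ord /=; congr (_ + _); apply: eq_bigr => v _;
  [have -> : lshift n v = lift v false by [] | have -> : rshift n v = lift v true by []];
  by rewrite proj_lift.
Qed.

Lemma side_last_path G (x : node (double_cover G)) p :
  path (adj (double_cover G)) x p -> side (last x p) = side x (+) odd (size p).
Proof.
elim: p x => [|y p IH] x /=; first by rewrite addbF.
move=> /andP[axy pyp]; rewrite (IH y pyp).
move: axy; rewrite adj_double_cover => /andP[/eqP -> _].
by case: (side x); case: (odd (size p)).
Qed.

(** Hence the double cover is bipartite: its odd-girth bound holds vacuously. *)
Lemma double_cover_odd_girth G k : odd_girth_ge k (double_cover G).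
Proof.
move=> [|x p] //= /andP[cyc _] odd_c.
have := side_last_path cyc; rewrite last_rcons size_rcons.
by move=> /=; case: (side x); case: (odd (size p)) odd_c.
Qed.

Lemma double_cover_feasible G (O : node G -> bits) :
  ec_feasible (double_cover G) (fun x => O (proj x)) -> ec_feasible G O.
Proof.
move=> [[sz cons] hid]; split; first split.
- by move=> v; have := sz (lift v false); rewrite deg_double_cover !proj_lift.
- move=> u v auv.
  have a2 : adj (double_cover G) (lift u false) (lift v true).
    by rewrite adj_double_cover !side_lift !proj_lift.
  by have := cons _ _ a2; rewrite !ebit_double_cover ?side_lift // !proj_lift.
- by move=> v; have := hid (lift v false); rewrite proj_lift.
Qed.

Lemma double_cover_size G (O : node G -> bits) :
  ec_size (double_cover G) (fun x => O (proj x)) = \sum_(v : node G) count id (O v).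
Proof. by rewrite /ec_size (sum_double_cover (fun v => count id (O v))) addnn doubleK. Qed.

(** ** Rings

    Nodes are located by their position [index v s]. *)

Definition ring_enum (G : pgraph) (s : seq (node G)) : Prop :=
  [/\ uniq s, size s = pg_n G &
      forall u v : node G, adj G v u = (u == next s v) || (u == prev s v)].

Lemma is_ring_enum m G : is_ring m G -> pg_n G = m /\ exists s : seq (node G), ring_enum s.
Proof.
move=> [e [s [Hu Hs Ha]]]; split => //; exists s; split => //.
by rewrite Hs e.
Qed.

Lemma index_next_seq (T : eqType) (s : seq T) v : uniq s -> v \in s ->
  index (next s v) s = (index v s).+1 \/
  ((index v s).+1 = size s /\ index (next s v) s = 0).
Proof.
move=> Hu vs; rewrite next_nth vs.
case: s Hu vs => [|y p] // Hu vs.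
set i := index v (y :: p).
have hi : i < (size p).+1 by rewrite /i -[(size p).+1]/(size (y :: p)) index_mem.
case: (ltngtP i (size p)) => [lt|gt|e].
- by left; rewrite -[nth y p _]/(nth y (y :: p) i.+1) index_uniq.
- by move: hi; rewrite ltnS leqNgt gt.
- by right; rewrite e nth_default //= eqxx.
Qed.

Section Ring.
Variables (G : pgraph) (s : seq (node G)).
Hypothesis ring_s : ring_enum s.

Lemma ring_mem v : v \in s.
Proof.
have [Hu Hs _] := ring_s.
have : s =i predT.
  apply/subset_cardP; last by apply/subsetP.
  by rewrite (card_uniqP Hu) Hs cardT size_enum_ord.
by move=> ->.
Qed.

Lemma ring_index_inj u w : index u s = index w s -> u = w.
Proof. by move=> h; apply/eqP; rewrite -(index_eq_mem (ring_mem u) (ring_mem w)) h. Qed.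

Lemma index_lt v : index v s < pg_n G.
Proof. by have [_ Hs _] := ring_s; rewrite -[X in _ < X]Hs index_mem ring_mem. Qed.

Lemma index_next_mod v : index (next s v) s = (index v s).+1 %% pg_n G.
Proof.
have [Hu Hs _] := ring_s; have := index_lt (next s v).
case: (index_next_seq Hu (ring_mem v)) => [->|[]]; first by move=> lt; rewrite modn_small.
by rewrite Hs => -> ->; rewrite modnn.
Qed.

Lemma eq_prev u v : (u == prev s v) = (v == next s u).
Proof.
have [Hu _ _] := ring_s.
by apply/eqP/eqP => [->|->]; [rewrite next_prev | rewrite prev_next].
Qed.

Lemma eq_next u v :
  (u == next s v) = ((index u s == (index v s).+1) ||
                     (((index v s).+1 == pg_n G) && (index u s == 0))).
Proof.
rewrite -(index_eq_mem (ring_mem u) (ring_mem (next s v))) index_next_mod.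
have := index_lt v; have := index_lt u => lu lv.
case: (ltngtP (index v s).+1 (pg_n G)) => [lt|gt|->].
- by rewrite modn_small // orbF.
- lia.
- by rewrite modnn /= (ltn_eqF lu).
Qed.

Lemma adj_next v : adj G v (next s v).
Proof. by have [_ _ ->] := ring_s; rewrite eqxx. Qed.
Lemma adj_prev v : adj G v (prev s v).
Proof. by have [_ _ ->] := ring_s; rewrite eqxx orbT. Qed.

Lemma index_iter_next v j : index (iter j (next s) v) s = (index v s + j) %% pg_n G.
Proof.
elim: j => [|j IH]; first by rewrite addn0 modn_small // index_lt.
by rewrite iterS index_next_mod IH -addn1 modnDml -addnA addn1 addnS.
Qed.

Lemma iter_next_order v : iter (pg_n G) (next s) v = v.
Proof.
by apply: ring_index_inj; rewrite index_iter_next modnDr modn_small // index_lt.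
Qed.

Lemma iter_next_reach u v :
  iter ((index u s + pg_n G - index v s) %% pg_n G) (next s) v = u.
Proof.
apply: ring_index_inj; rewrite index_iter_next modnDmr.
have l1 := index_lt u; have l2 := index_lt v.
have -> : index v s + (index u s + pg_n G - index v s) = index u s + pg_n G by lia.
by rewrite modnDr modn_small.
Qed.

(** Winding numbers: a walk of length [a + b] ([a] backward, [b] forward
    steps) from [x] ends at a position congruent to [index x s + b - a]. *)
Lemma walk_winding (x : node G) p : path (adj G) x p ->
  exists a b w1 w2, index (last x p) s + a + pg_n G * w1 = index x s + b + pg_n G * w2
                    /\ a + b = size p.
Proof.
elim: p x => [|y p IH] x /=; first by exists 0, 0, 0, 0.
move=> /andP[axy pyp].
have [a [b [w1 [w2 [e1 e2]]]]] := IH y pyp.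
have l1 := index_lt x; have l2 := index_lt y.
have [_ _ Ha] := ring_s.
move: axy; rewrite Ha eq_prev !eq_next.
case/orP => /orP[/eqP h|/andP[/eqP h1 /eqP h2]].
- by exists a, b.+1, w1, w2; split; lia.
- by exists a, b.+1, w1.+1, w2; split; lia.
- by exists a.+1, b, w1, w2; split; lia.
- by exists a.+1, b, w1, w2.+1; split; lia.
Qed.

(** A closed walk winds an integral number of times, so an odd one is at
    least as long as the ring. *)
Lemma ring_odd_girth : odd_girth_ge (pg_n G) G.
Proof.
move=> [|x p] //= /andP[cyc _] odd_c.
have [a [b [w1 [w2 [e1 e2]]]]] := walk_winding cyc.
rewrite last_rcons size_rcons in e1 e2.
rewrite leqNgt; apply/negP => lt.
have e3 : a + pg_n G * w1 = b + pg_n G * w2 by lia.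
case: (ltngtP w1 w2) => hw.
- have : pg_n G * w1 + pg_n G <= pg_n G * w2 by rewrite addnC -mulnS leq_mul2l hw orbT.
  lia.
- have : pg_n G * w2 + pg_n G <= pg_n G * w1 by rewrite addnC -mulnS leq_mul2l hw orbT.
  lia.
- subst w2; have ab : a = b by lia.
  have : odd (a + b) by rewrite e2.
  by rewrite ab addnn odd_double.
Qed.

(** From now on the ring has at least three nodes and simple port lists, so
    the ports of [v] are its two distinct ring neighbours. *)
Hypothesis order_gt2 : 2 < pg_n G.
Hypothesis ports_uniq : forall v : node G, uniq (pg_port G v).

Lemma next_neq_prev v : next s v != prev s v.
Proof.
apply/negP; rewrite eq_prev => /eqP e.
have h1 := eq_next (next s v) v; rewrite eqxx in h1.
have h2 := eq_next v (next s v); rewrite -e eqxx in h2.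
have := index_lt v; have := index_lt (next s v).
move: h1 h2 => /esym h1 /esym h2; lia.
Qed.

Lemma ring_ports v : perm_eq (pg_port G v) [:: next s v; prev s v].
Proof.
apply: uniq_perm => //=; first by rewrite inE andbT next_neq_prev.
by move=> u; rewrite !inE -/(adj G v u); case: ring_s => _ _ ->.
Qed.

Lemma ring_deg v : deg G v = 2.
Proof. by rewrite /deg (perm_size (ring_ports v)). Qed.

(** Each edge [{v, next s v}] is counted once at each endpoint, so the total
    number of marked ports is twice the number of edges in the cover. *)
Lemma ring_count_sum O : encodes_edge_set G O ->
  \sum_(v : node G) count id (O v) = (\sum_(v : node G) ebit G O v (next s v)).*2.
Proof.
move=> [sz cons].
have count_ports v : count id (O v) = ebit G O v (next s v) + ebit G O v (prev s v).
  rewrite (count_eq_sum_index (ports_uniq v) (sz v)) (perm_big _ (ring_ports v)).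
  by rewrite !big_cons big_nil /= addn0.
rewrite (eq_bigr _ (fun v _ => count_ports v)) big_split /= -addnn; congr (_ + _).
transitivity (\sum_(v : node G) (ebit G O (prev s v) v : nat)).
  by apply: eq_bigr => v _; rewrite cons // adj_prev.
have [Hu _ _] := ring_s.
rewrite [RHS](reindex_inj (can_inj (next_prev Hu))) /=.
by apply: eq_bigr => v _; rewrite next_prev.
Qed.

Lemma ring_count_size O : encodes_edge_set G O ->
  \sum_(v : node G) count id (O v) = (ec_size G O).*2.
Proof. by move=> enc; rewrite /ec_size (ring_count_sum enc) doubleK. Qed.

Lemma ring_full_cover O : encodes_edge_set G O -> ec_size G O = pg_n G ->
  forall v, rich (O v) && saturated (O v).
Proof.
move=> enc full v.
have size2 w : size (O w) = 2 by rewrite enc.1 ring_deg.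
have le2 w : count id (O w) <= 2 by rewrite -(size2 w) count_size.
have /(leqif_sum (P := predT)) [_] : forall w, predT w ->
    count id (O w) <= 2 ?= iff (count id (O w) == 2) by move=> w _; apply: leqif_eq.
rewrite (ring_count_size enc) full sum_nat_const card_ord -mul2n mulnC eqxx.
by move=> /esym /forall_inP /(_ v isT) /eqP c2; rewrite /rich /saturated c2 size2.
Qed.

End Ring.

Lemma feasible_count_lower G (O : node G -> bits) : ec_feasible G O ->
  pg_n G <= \sum_(v : node G) count id (O v).
Proof.
move=> [_ hid]; rewrite -[X in X <= _]card_ord -sum1_card.
by apply: leq_sum => v _; rewrite -has_count.
Qed.

(** ** The double cover of an odd ring

    For an odd ring [G], [double_cover G] is the ring on [2 n] nodes: it is
    connected (walking [n] steps forward switches sides), and it has the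
    perfect matching that pairs [lift v false] with [lift (next s v) true]. *)

Section OddRingCover.
Variables (G : pgraph) (s : seq (node G)).
Hypothesis ring_s : ring_enum s.
Hypothesis wf_G : wf_graph G.

Lemma double_cover_walk (v : node G) b j :
  connect (adj (double_cover G)) (lift v b) (lift (iter j (next s) v) (b (+) odd j)).
Proof.
elim: j => [|j IH]; first by rewrite addbF.
apply: (connect_trans IH); apply: connect1.
by rewrite adj_double_cover !side_lift !proj_lift iterS oddS addbN eqxx adj_next.
Qed.

Lemma wf_double_cover : odd (pg_n G) -> wf_graph (double_cover G).
Proof.
move: wf_G => [n0 up _ sym _] odd_n; split.
- by rewrite /= addn_gt0 n0.
- by move=> x; rewrite /= (map_inj_uniq (@lift_inj _ _)) up.
- by move=> x; rewrite adj_double_cover; case: (side x).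
- by move=> x y; rewrite !adj_double_cover sym; case: (side x); case: (side y).
move=> x y; rewrite -(lift_proj x) -(lift_proj y).
set j0 := (index (proj y) s + pg_n G - index (proj x) s) %% pg_n G.
case: (boolP (side x (+) odd j0 == side y)) => [/eqP e|ne].
  by have := double_cover_walk (proj x) (side x) j0; rewrite iter_next_reach // e.
have := double_cover_walk (proj x) (side x) (j0 + pg_n G).
rewrite iterD iter_next_order // iter_next_reach // oddD odd_n.
by move: ne; case: (side x); case: (side y); case: (odd j0).
Qed.

Definition partner (x : node (double_cover G)) : node G :=
  if side x then prev s (proj x) else next s (proj x).

Definition matching_cover (x : node (double_cover G)) : bits :=
  map (fun u => u == partner x) (pg_port G (proj x)).

Lemma partner_port x : partner x \in pg_port G (proj x).
Proof. by rewrite /partner; case: (side x); [exact: adj_prev | exact: adj_next]. Qed.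

Lemma matching_cover_feasible : ec_feasible (double_cover G) matching_cover.
Proof.
have [_ _ _ sym _] := wf_G.
split; first split.
- by move=> x; rewrite deg_double_cover /matching_cover size_map.
- move=> x y; rewrite adj_double_cover => /andP[/eqP sy axy].
  have sx : side x = ~~ side y by rewrite sy negbK.
  have ayx : adj G (proj y) (proj x) by rewrite sym.
  rewrite !ebit_double_cover // /matching_cover !nth_map_index // /partner sx.
  by case: (side y); rewrite /= eq_prev.
- move=> x; rewrite /matching_cover has_map; apply/hasP.
  by exists (partner x); rewrite /= ?eqxx ?partner_port.
Qed.

(** Each node of the double cover has exactly one marked port, so the matching
    has [n] edges and OPT of the double cover is at most [n]. *)
Lemma double_cover_OPT_le k : is_OPT_ec (double_cover G) k -> k <= pg_n G.
Proof.
move=> [_ /(_ _ matching_cover_feasible)]; rewrite /ec_size.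
have -> : \sum_(x : node (double_cover G)) count id (matching_cover x) = pg_n G + pg_n G.
  rewrite -[RHS]card_ord -sum1_card; apply: eq_bigr => x _.
  rewrite /matching_cover count_map.
  by rewrite (eq_count (a2 := pred1 (partner x))) // count_uniq_mem ?partner_port; case wf_G.
by rewrite addnn doubleK.
Qed.

End OddRingCover.

(** ** The one-bit extension of a verifier

    The first bit of each label claims that the node is rich. *)

Definition flag_ver (ver : verifier) : verifier := fun i o l nb =>
  [&& head false l == rich o,
      (rich o && saturated o) ==> all (fun l' => ~~ head false l') nb
    & ver i o (behead l) (map behead nb)].

Definition flag_prv (prv : prover_t) : prover_t :=
  fun G I O v => rich (O v) :: prv G I O v.
Arguments flag_prv prv : clear implicits.

Lemma flag_prv_size (FY FY' : iopred) prv r :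
  (forall G I O, FY G I O -> FY' G I O) -> proof_size_le FY' prv r ->
  proof_size_le FY (flag_prv prv) r.+1.
Proof. by move=> sub psize G I O fy v; rewrite /= ltnS (psize _ _ _ (sub _ _ _ fy)). Qed.

Lemma saturated_ebit G (O : node G -> bits) (v u : node G) :
  size (O v) = deg G v -> saturated (O v) -> adj G v u -> ebit G O v u.
Proof.
move=> sz /eqP sat avu; have : all id (O v) by rewrite all_count sat.
by move/all_nthP; apply; rewrite sz index_mem.
Qed.

Lemma flag_complete P prv ver :
  (forall G I O, ec_FY P G I O -> accepts ver G I O (prv G I O)) ->
  forall G I O, ec_FY P G I O -> accepts (flag_ver ver) G I O (flag_prv prv G I O).
Proof.
move=> compl G I O fy v; have [[wf _ _] feas [_ opt]] := fy.
rewrite /flag_ver /= eqxx /=; apply/andP; split.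
  apply/implyP => /andP[rv sv]; rewrite /nbr_labels all_map; apply/allP => u avu /=.
  apply/negP => ru; apply: (optimal_cover_no_rich_edge wf feas opt avu _ rv ru).
  exact: saturated_ebit (feas.1.1 v) sv avu.
rewrite /nbr_labels -map_comp (eq_map (g := prv G I O)) //.
exact: compl.
Qed.

Lemma flag_rejects_rich_edge ver G I O (L : node G -> bits) (v u : node G) :
  accepts (flag_ver ver) G I O L -> adj G v u ->
  rich (O v) && saturated (O v) -> ~~ rich (O u).
Proof.
move=> acc avu rsv; have := acc v => /and3P[_ /implyP /(_ rsv) + _].
rewrite /nbr_labels all_map => /allP /(_ u avu) /=.
by have := acc u => /and3P[/eqP -> _ _].
Qed.

Lemma flag_accepts_double_cover ver G I O (L : node G -> bits) :
  accepts (flag_ver ver) G I O L ->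
  accepts ver (double_cover G) (fun x => I (proj x)) (fun x => O (proj x))
                               (fun x => behead (L (proj x))).
Proof.
move=> acc x; have := acc (proj x) => /and3P[_ _ h].
by rewrite nbr_labels_double_cover.
Qed.

(** Rings on [m] nodes have odd-girth [m], so their optimal instances are
    optimal instances of the odd-girth family. *)
Lemma ring_FY_odd_girth m G I O :
  ec_FY (is_ring m) G I O -> ec_FY (odd_girth_ge m) G I O.
Proof.
move=> [[wf ring ex] feas opt]; split => //; split => //.
have [<- [s H]] := is_ring_enum ring; exact: ring_odd_girth H.
Qed.

(** With approximation ratio (κ+1)/κ and OPT ≤ 2κ+1 on the double cover,
    a cover of the (2κ+1)-ring is optimal, or is the whole triangle. *)
Lemma approx_ratio_bound k X : 1 <= k ->
  k * X.*2 <= k.+1 * (2 * k).+1 -> X <= k.+1 \/ X = (2 * k).+1.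
Proof.
move=> hk h; have [k1|k2] := leqP k 1.
  have k_eq1 : k = 1 by lia.
  by move: h; rewrite k_eq1; lia.
by left; nia.
Qed.

(** The double cover is a legal instance of the odd-girth family,
    so the APLS forces the cover to be (κ+1)/κ-approximate there. *)
Lemma flag_sound k ver : 1 <= k ->
  (forall G I O, ec_FN k.+1 k (odd_girth_ge (2 * k).+1) G I O ->
     forall L, ~ accepts ver G I O L) ->
  forall G I O, ec_FN 1 1 (is_ring (2 * k).+1) G I O ->
     forall L, ~ accepts (flag_ver ver) G I O L.
Proof.
move=> hk sound G I O [[wf ring _] not_opt] L acc.
have [n_eq [s ring_s]] := is_ring_enum ring.
have [n_gt0 ports_uniq _ _ _] := wf.
have n_gt2 : 2 < pg_n G by rewrite n_eq; lia.
have odd_n : odd (pg_n G) by rewrite n_eq /= mul2n odd_double.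
apply: (sound _ _ _ _ _ (flag_accepts_double_cover acc)); split.
  split; [exact: wf_double_cover ring_s wf odd_n | exact: double_cover_odd_girth |].
  by exists (matching_cover s); exact: matching_cover_feasible.
move=> [feas2 [opt2 [is_opt2 approx]]].
have feas := double_cover_feasible feas2.
have count_size := ring_count_size ring_s n_gt2 ports_uniq feas.1.
have opt_lower O' : ec_feasible G O' -> k.+1 <= ec_size G O'.
  move=> feas'; have := feasible_count_lower feas'.
  by rewrite (ring_count_size ring_s n_gt2 ports_uniq feas'.1) n_eq; lia.
have opt2_le := double_cover_OPT_le ring_s wf is_opt2.
rewrite double_cover_size count_size n_eq in approx opt2_le.
have approx_n : k * (ec_size G O).*2 <= k.+1 * (2 * k).+1.
  by apply: leq_trans approx _; rewrite leq_mul2l opt2_le orbT.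
have [size_le|size_full] := approx_ratio_bound hk approx_n.
- apply: not_opt; split => //; exists (ec_size G O); split; last by rewrite !mul1n.
  split; first by exists O.
  by move=> O' /opt_lower; apply: leq_trans size_le.
- have full := ring_full_cover ring_s n_gt2 ports_uniq feas.1 (etrans size_full (esym n_eq)).
  pose v : node G := Ordinal n_gt0.
  have := flag_rejects_rich_edge acc (adj_next ring_s v) (full v).
  by have /andP[-> _] := full (next s v).
Qed.

Theorem lemma5p6 :
  exists c : nat, forall kappa r : nat, 1 <= kappa ->
    has_ec_apls kappa.+1 kappa (odd_girth_ge (2 * kappa).+1) r ->
    has_ec_apls 1 1 (is_ring (2 * kappa).+1) (r + c).
Proof.
exists 1 => k r hk [prv [ver [[compl sound] psize]]].
exists (flag_prv prv), (flag_ver ver); split; last first.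
  by rewrite addn1; apply: flag_prv_size psize => G I O; exact: ring_FY_odd_girth.
split; last exact: flag_sound.
by apply: flag_complete => G I O fy; apply/compl/ring_FY_odd_girth.
Qed.
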